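(* Let $T=2^m$, $d\ge1$, $u_{1:T}\in(\mathbb{R}^d)^T$, $\bar u=\frac1T\sum_{t=1}^Tu_t$, and $\bar S=\sum_{t=1}^T\|u_t-\bar u\|_2$. Then for every scale $j^*\in[1:m]$, $\bar S^{(j^* )}\le\bar S$, where $\bar S^{(j^* )}$ is defined in the context.
   Context: Haar features for $T=2^m$: for scale $j\in[1:m]$ and location $l\in[1:2^{-j}T]$, $h^{(j,l)}\in\mathbb{R}^T$ has $t$-th entry $1$ for $t\in[2^j(l-1)+1:2^j(l-1)+2^{j-1}]$, $-1$ for $t\in[2^j(l-1)+2^{j-1}+1:2^jl]$, and $0$ otherwise; normalized $\tilde h^{(j,l)}=2^{-j/2}h^{(j,l)}$. For $i\in[1:d]$, $u^{(i)}_{1:T}\in\mathbb{R}^T$ is the sequence of $i$-th coordinates of $u_1,\ldots,u_T$. Coefficient $\hat u^{(j,l)}\in\mathbb{R}^d$ has $i$-th entry $\langle\tilde h^{(j,l)},u^{(i)}_{1:T}\rangle$. Detail sequences: $z^{(j,l)}_t=\hat u^{(j,l)}\tilde h^{(j,l)}_t$, $z^{(j)}=\sum_l z^{(j,l)}$, and $\bar S^{(j)}=\sum_{t=1}^T\|z^{(j)}_t\|_2$. *)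

(* the statement is algebraic, stated over any real closed field R
   (the reals are one instance). Indices are 0-based: t : 'I_(2^m) stands for t+1,
   Haar location l (0-based) stands for l+1. *)
From HB Require Import structures.
From mathcomp Require Import all_boot all_order all_algebra.
Set Implicit Arguments. Unset Strict Implicit. Unset Printing Implicit Defensive.
Import Order.TTheory GRing.Theory Num.Theory.
Local Open Scope ring_scope.

Definition norm2 {R : rcfType} {d : nat} (x : 'I_d -> R) : R :=
  Num.sqrt (\sum_(i < d) x i ^+ 2).

(* Unnormalized Haar feature h^{(j,l+1)} evaluated at time t+1 (0-based l, t):
   1 on [2^j l, 2^j l + 2^(j-1)), -1 on [2^j l + 2^(j-1), 2^j (l+1)), 0 otherwise. *)
Definition haar {R : rcfType} (j l t : nat) : R :=
  if ((2 ^ j * l <= t) && (t < 2 ^ j * l + 2 ^ j.-1))%N then 1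
  else if ((2 ^ j * l + 2 ^ j.-1 <= t) && (t < 2 ^ j * l.+1))%N then -1
  else 0.

Definition haarn {R : rcfType} (j l t : nat) : R :=
  haar j l t / Num.sqrt (2 ^+ j).

Definition haar_coef {R : rcfType} (m d : nat) (u : 'I_(2 ^ m) -> 'I_d -> R)
  (j l : nat) (i : 'I_d) : R :=
  \sum_(t < 2 ^ m) haarn j l t * u t i.

Definition detail {R : rcfType} (m d : nat) (u : 'I_(2 ^ m) -> 'I_d -> R)
  (j : nat) (t : 'I_(2 ^ m)) (i : 'I_d) : R :=
  \sum_(l < 2 ^ (m - j)) haar_coef u j l i * haarn j l t.

Definition Sbar_scale {R : rcfType} (m d : nat) (u : 'I_(2 ^ m) -> 'I_d -> R)
  (j : nat) : R :=
  \sum_(t < 2 ^ m) norm2 (detail u j t).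

Definition umean {R : rcfType} (m d : nat) (u : 'I_(2 ^ m) -> 'I_d -> R)
  (i : 'I_d) : R :=
  (2 ^+ m)^-1 * \sum_(t < 2 ^ m) u t i.

Definition Sbar {R : rcfType} (m d : nat) (u : 'I_(2 ^ m) -> 'I_d -> R) : R :=
  \sum_(t < 2 ^ m) norm2 (fun i => u t i - umean u i).

(* For j >= 1 the features h^(j,l) live on the disjoint blocks
   [2^j l, 2^j (l+1)) and have zero sum, so the coefficients hat u^(j,l) are unchanged
   when every u_t is replaced by v_t = u_t - mean u.  Writing a_(l,t) for the
   normalized features, the triangle inequality gives
     sum_t |z_t| <= sum_t |v_t| * sum_l |a_(l,t)| * sum_s |a_(l,s)|,
   and since sum_s |a_(l,s)| = 2^(j/2) = 1 / |a_(l,t)| on its block, the weight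
   of v_t is the number of blocks containing t, which is at most one. *)
From HB Require Import structures.
From mathcomp Require Import all_boot all_order all_algebra.
From mathcomp Require Import ring lra zify.
Set Implicit Arguments.
Unset Strict Implicit.
Unset Printing Implicit Defensive.
Import Order.TTheory GRing.Theory Num.Theory.
Local Open Scope ring_scope.

Section EuclideanNorm.
Variables (R : rcfType) (d : nat).
Implicit Types x y : 'I_d -> R.

Lemma lagrange_identity x y :
  \sum_(i < d) \sum_(k < d) (x i * y k - x k * y i) ^+ 2 =
  2 * ((\sum_(i < d) x i ^+ 2) * (\sum_(i < d) y i ^+ 2) - (\sum_(i < d) x i * y i) ^+ 2).
Proof.
pose G i k := x i ^+ 2 * y k ^+ 2.
pose H i k := (x i * y i) * (x k * y k).
have -> : \sum_(i < d) \sum_(k < d) (x i * y k - x k * y i) ^+ 2 =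
    \sum_(i < d) \sum_(k < d) G i k + \sum_(i < d) \sum_(k < d) G k i
    - 2 * \sum_(i < d) \sum_(k < d) H i k.
  rewrite -big_split mulr_sumr -sumrB; apply: eq_bigr => i _.
  rewrite -big_split mulr_sumr -sumrB; apply: eq_bigr => k _ /=; rewrite /G /H; ring.
rewrite [X in _ + X - _]exchange_big /G /H expr2 -!big_distrlr /=; ring.
Qed.

Lemma sumsq_ge0 x : 0 <= \sum_(i < d) x i ^+ 2.
Proof. by rewrite sumr_ge0 // => i _; rewrite sqr_ge0. Qed.

Lemma norm2_ge0 x : 0 <= norm2 x.
Proof. exact: sqrtr_ge0. Qed.

Lemma sqr_norm2 x : norm2 x ^+ 2 = \sum_(i < d) x i ^+ 2.
Proof. by rewrite sqr_sqrtr ?sumsq_ge0. Qed.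

Lemma eq_norm2 x y : x =1 y -> norm2 x = norm2 y.
Proof. by move=> eq_xy; rewrite /norm2; under eq_bigr do rewrite eq_xy. Qed.

Lemma norm2Z (c : R) x : norm2 (fun i => c * x i) = `|c| * norm2 x.
Proof.
rewrite /norm2 -sqrtr_sqr -sqrtrM ?sqr_ge0 // mulr_sumr.
by under eq_bigr do rewrite exprMn.
Qed.

Lemma cauchy_schwarz x y : \sum_(i < d) x i * y i <= norm2 x * norm2 y.
Proof.
have lagrange_ge0 : 0 <= \sum_(i < d) \sum_(k < d) (x i * y k - x k * y i) ^+ 2.
  by do 2!(apply: sumr_ge0 => ? _); rewrite sqr_ge0.
rewrite /norm2 -sqrtrM ?sumsq_ge0 // (le_trans (ler_norm _)) //.
rewrite -sqrtr_sqr ler_sqrt ?mulr_ge0 ?sumsq_ge0 //.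
by move: lagrange_ge0; rewrite lagrange_identity pmulr_rge0 // subr_ge0.
Qed.

Lemma ler_norm2D x y : norm2 (fun i => x i + y i) <= norm2 x + norm2 y.
Proof.
rewrite -ler_sqr ?nnegrE ?addr_ge0 ?norm2_ge0 // sqrrD !sqr_norm2.
under eq_bigr do rewrite sqrrD.
rewrite !big_split /=; have := cauchy_schwarz x y; lra.
Qed.

Lemma ler_norm2_sum (I : Type) (r : seq I) (F : I -> 'I_d -> R) :
  norm2 (fun i => \sum_(k <- r) F k i) <= \sum_(k <- r) norm2 (F k).
Proof.
elim: r => [|k r IHr].
  by rewrite big_nil /norm2 big1 ?sqrtr0 // => i _; rewrite big_nil expr0n.
rewrite big_cons (eq_norm2 (y := fun i => F k i + \sum_(k <- r) F k i)) => [|i];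
  last by rewrite big_cons.
by rewrite (le_trans (ler_norm2D _ _)) // lerD2l.
Qed.

Lemma ler_norm2_sumZ (I : Type) (r : seq I) (c : I -> R) (F : I -> 'I_d -> R) :
  norm2 (fun i => \sum_(k <- r) c k * F k i) <= \sum_(k <- r) `|c k| * norm2 (F k).
Proof.
under eq_bigr do rewrite -norm2Z.
exact: (ler_norm2_sum r (fun k i => c k * F k i)).
Qed.

(* Two triangle inequalities; the resulting triple sum is regrouped by exchanging [t] and [s]. *)
Lemma sum_norm2_synthesis_analysis (I T : finType) (a : I -> T -> R)
    (v : T -> 'I_d -> R) :
  \sum_t norm2 (fun i => \sum_l a l t * \sum_s a l s * v s i)
  <= \sum_t norm2 (v t) * \sum_l `|a l t| * \sum_s `|a l s|.
Proof.
apply: (le_trans (ler_sum _ (fun t _ => ler_norm2_sumZ _ (fun l => a l t) _))).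
apply: (le_trans (ler_sum _ (fun t _ => ler_sum _ (fun l _ =>
          ler_wpM2l (normr_ge0 (a l t)) (ler_norm2_sumZ _ (a l) v))))).
rewrite le_eqVlt; apply/predU1P; left.
rewrite exchange_big /=; under eq_bigr do rewrite -mulr_suml.
under [RHS]eq_bigr do rewrite mulr_sumr; rewrite [RHS]exchange_big /=.
by apply: eq_bigr => l _; rewrite mulrC mulr_suml; apply: eq_bigr => t _; ring.
Qed.
End EuclideanNorm.

Section HaarFeatures.
Variable R : rcfType.

Lemma sum_indicator_interval N a b : (a <= b <= N)%N ->
  \sum_(t < N) ((a <= t < b)%N%:R : R) = (b - a)%:R.
Proof.
case/andP=> _ bN; rewrite -sumr_const_nat big_geq_mkord.
rewrite (@big_ord_widen_cond _ _ _ b N (fun t => true && (a <= t))%N (fun=> 1)) // [RHS]big_mkcond.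
by apply: eq_bigr => t _ /=; case: (_ && _).
Qed.

Lemma sum_indicator_eq N c : \sum_(l < N) ((l == c :> nat)%:R : R) = (c < N)%N%:R.
Proof.
case: ltnP => [cN|Nc].
  rewrite (bigD1 (Ordinal cN)) //= eqxx big1 ?addr0 // => l.
  by rewrite -val_eqE => /negbTE->.
by rewrite big1 // => l _; rewrite ltn_eqF // (leq_trans (ltn_ord l)).
Qed.

Lemma mem_block p l t : (0 < p)%N -> (p * l <= t < p * l.+1)%N = (l == t %/ p)%N.
Proof.
by move=> p_gt0; rewrite eqn_leq leq_divRL // -[(t %/ p <= l)%N]ltnS ltn_divLR // !(mulnC p).
Qed.

Lemma haarE j l t : haar j l t =
  (2 ^ j * l <= t < 2 ^ j * l + 2 ^ j.-1)%N%:R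
  - (2 ^ j * l + 2 ^ j.-1 <= t < 2 ^ j * l.+1)%N%:R :> R.
Proof.
rewrite /haar; case: ifP => [/andP[_ lt_t]|_]; last by case: ifP; rewrite ?subr0 ?sub0r.
by rewrite leqNgt lt_t subr0.
Qed.

Lemma normr_haar j l t : `|haar j l t| = (2 ^ j * l <= t < 2 ^ j * l.+1)%N%:R :> R.
Proof.
have half_le : (2 ^ j.-1 <= 2 ^ j)%N by rewrite leq_pexp2l // leq_pred.
rewrite /haar mulnS; case: ifP => in1.
  by rewrite normr1 (_ : (_ <= t < _)%N = true) //; lia.
case: ifP => in2.
  by rewrite normrN normr1 (_ : (_ <= t < _)%N = true) //; lia.
by rewrite normr0 (_ : (_ <= t < _)%N = false) //; lia.
Qed.

Lemma sum_haar j l N : (0 < j)%N -> (2 ^ j * l.+1 <= N)%N ->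
  \sum_(t < N) haar j l t = 0 :> R.
Proof.
move=> j_gt0 lN; have two_halves : (2 ^ j = 2 ^ j.-1 + 2 ^ j.-1)%N.
  by rewrite -{1}(prednK j_gt0) expnS mul2n addnn.
under eq_bigr do rewrite haarE.
by rewrite sumrB !sum_indicator_interval; [apply/eqP; rewrite subr_eq0 eqr_nat; apply/eqP|..]; lia.
Qed.

Lemma sum_normr_haar j l N : (2 ^ j * l.+1 <= N)%N ->
  \sum_(t < N) `|haar j l t| = (2 ^ j)%:R :> R.
Proof.
move=> lN; under eq_bigr do rewrite normr_haar; rewrite sum_indicator_interval.
  by rewrite mulnS addnK.
by rewrite lN mulnS leq_addl.
Qed.

Lemma sum_normr_haar_le1 j M t : \sum_(l < M) `|haar j l t| <= 1 :> R.
Proof.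
under eq_bigr do rewrite normr_haar mem_block ?expn_gt0 //.
by rewrite sum_indicator_eq; case: ltnP.
Qed.

Lemma normr_haarn j l t : `|haarn j l t| = `|haar j l t| / Num.sqrt (2 ^+ j) :> R.
Proof. by rewrite /haarn normrM normfV (ger0_norm (sqrtr_ge0 _)). Qed.

Lemma sum_haarn_weight_le1 j M N t : (2 ^ j * M <= N)%N ->
  \sum_(l < M) `|haarn j l t| * \sum_(s < N) `|haarn j l s| <= 1 :> R.
Proof.
move=> MN; apply: le_trans (sum_normr_haar_le1 j M t).
rewrite le_eqVlt; apply/predU1P; left; apply: eq_bigr => l _.
have lN : (2 ^ j * l.+1 <= N)%N by rewrite (leq_trans _ MN) // leq_mul2l ltn_ord orbT.
under eq_bigr do rewrite normr_haarn.
rewrite -mulr_suml sum_normr_haar // normr_haarn natrX; set q := Num.sqrt _.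
have q_neq0 : q != 0 by rewrite gt_eqF // sqrtr_gt0 exprn_gt0.
have sqr_q : q ^+ 2 = 2 ^+ j by rewrite sqr_sqrtr ?exprn_ge0.
by rewrite -sqr_q; field.
Qed.

Lemma haar_coef_translate m d (u : 'I_(2 ^ m) -> 'I_d -> R) j l i (c : R) :
  (0 < j)%N -> (2 ^ j * l.+1 <= 2 ^ m)%N ->
  haar_coef u j l i = \sum_(t < 2 ^ m) haarn j l t * (u t i - c).
Proof.
move=> j_gt0 lN; under [RHS]eq_bigr do rewrite mulrBr.
rewrite sumrB -mulr_suml (_ : \sum_(t < 2 ^ m) haarn j l t = 0) ?mul0r ?subr0 //.
by rewrite /haarn -mulr_suml sum_haar ?mul0r.
Qed.

End HaarFeatures.

Theorem lemma8 (R : rcfType) (m d : nat) (hd : (1 <= d)%N)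
  (u : 'I_(2 ^ m) -> 'I_d -> R) (j : nat) (hj : (1 <= j <= m)%N) :
  Sbar_scale u j <= Sbar u.
Proof.
have [j_gt0 jm] := andP hj.
have blocks : (2 ^ j * 2 ^ (m - j) = 2 ^ m)%N by rewrite -expnD subnKC.
pose v t i := u t i - umean u i.
have detailE t : norm2 (detail u j t) = norm2 (fun i =>
    \sum_(l < 2 ^ (m - j)) haarn j l t * \sum_(s < 2 ^ m) haarn j l s * v s i).
  apply: eq_norm2 => i; apply: eq_bigr => l _.
  by rewrite mulrC (haar_coef_translate u i (umean u i)) // -blocks leq_mul2l ltn_ord orbT.
rewrite /Sbar_scale /Sbar; under eq_bigr do rewrite detailE.
apply: le_trans (sum_norm2_synthesis_analysis _ _) _.
apply: ler_sum => t _; apply: ler_piMr (norm2_ge0 _) _.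
by apply: sum_haarn_weight_le1; rewrite blocks.
Qed.
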